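(* Let $R$ be a unital ring, $\Delta=\{\delta_n\}_{n\in\omega}$ a higher derivation on $R$, and $\overline{\Delta}=\{\overline{\delta_n}\}$ the induced higher derivation on $R\otimes_{\mathbb{Z}}R^{op}$. Then: (1) For every left Gabriel filter $\mathcal{F}_l$ and right Gabriel filter $\mathcal{F}_r$ on $R$, the symmetric filter ${}_l\mathcal{F}_r$ is higher derivation invariant: for every $I\in{}_l\mathcal{F}_r$ and every $n$ there is $J\in{}_l\mathcal{F}_r$ with $\overline{\delta_i}(J)\subseteq I$ for all $i\le n$. (2) For every such symmetric filter ${}_l\mathcal{F}_r$, every $R$-bimodule $M$ and every $\Delta$-higher derivation $D=\{d_n\}$ on $M$, there is a unique $\Delta$-higher derivation $\{\bar d_n\}$ on the symmetric module of quotients ${}_lM_r$ with $\bar d_n\circ q_M=q_M\circ d_n$ for all $n$. (3) If ${}_l\mathcal{F}^1_r\subseteq{}_l\mathcal{F}^2_r$ are two such symmetric filters, then for every $R$-bimodule $M$ and every $\Delta$-higher derivation $D$ on $M$, the extensions $\{d^{(1)}_n\}$ of $D$ to ${}_lM^1_r$ and $\{d^{(2)}_n\}$ to ${}_lM^2_r$ agree: $q_{12}\circ d^{(1)}_n=d^{(2)}_n\circ q_{12}$ for all $n$.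
   Context: $R$-bimodules are identified with right $R\otimes_{\mathbb{Z}}R^{op}$-modules. A higher derivation on a ring $S$ is a family $\{\delta_n\}$ of additive maps with $\delta_0=\mathrm{id}$ and $\delta_n(rs)=\sum_{i=0}^n\delta_i(r)\delta_{n-i}(s)$. The induced higher derivation on $R\otimes_{\mathbb{Z}}R^{op}$ is $\overline{\delta_n}(r\otimes s)=\sum_{i=0}^n\delta_i(r)\otimes\delta_{n-i}(s)$. For an $R$-bimodule $M$, a $\Delta$-higher derivation is a family $\{d_n\}$ of additive maps $M\to M$ with $d_0=\mathrm{id}_M$, $d_n(xr)=\sum_{i=0}^n d_i(x)\delta_{n-i}(r)$ and $d_n(rx)=\sum_{i=0}^n\delta_i(r)d_{n-i}(x)$ for all $x\in M$, $r\in R$ (equivalently a higher $\overline{\Delta}$-derivation of $M$ as right $R\otimes R^{op}$-module). Given a left Gabriel filter $\mathcal{F}_l$ (hereditary torsion theory $\tau_l$ on left modules, torsion class $\mathcal{T}_l$) and a right Gabriel filter $\mathcal{F}_r$ (torsion class $\mathcal{T}_r$), the symmetric torsion theory ${}_l\tau_r$ is the hereditary torsion theory on $R$-bimodules whose torsion class is ${}_l\mathcal{T}_r=\mathcal{T}_l\cap\mathcal{T}_r$ (bimodules torsion both as left and as right modules); ${}_l\mathcal{F}_r$ is its Gabriel filter of right ideals of $R\otimes_{\mathbb{Z}}R^{op}$. The symmetric module of quotients is ${}_lM_r=\varinjlim_{K\in{}_l\mathcal{F}_r}\mathrm{Hom}(K,M/{}_l\mathcal{T}_r(M))$ (bimodule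 homomorphisms), with the canonical map $q_M:M\to{}_lM_r$ whose kernel is ${}_l\mathcal{T}_r(M)$. In (3), $q_{12}:{}_lM^1_r\to{}_lM^2_r$ is the canonical map induced by the inclusion of filters. *)

From mathcomp Require Import all_boot all_algebra.
Import GRing.Theory.

Set Implicit Arguments.
Unset Strict Implicit.
Unset Printing Implicit Defensive.

Local Open Scope ring_scope.

Definition psubset (T : Type) (A B : T -> Prop) : Prop := forall x, A x -> B x.
Definition pinter (T : Type) (A B : T -> Prop) : T -> Prop := fun x => A x /\ B x.
Definition pfull (T : Type) : T -> Prop := fun _ => True.

Section RingSide.
Variable R : pzRingType.

Definition is_left_ideal (I : R -> Prop) : Prop :=
  [/\ I 0, (forall x y, I x -> I y -> I (x - y)) & (forall r x, I x -> I (r * x))].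

Definition is_right_ideal (I : R -> Prop) : Prop :=
  [/\ I 0, (forall x y, I x -> I y -> I (x - y)) & (forall r x, I x -> I (x * r))].

Definition lcolon (I : R -> Prop) (a : R) : R -> Prop := fun x => I (x * a).
Definition rcolon (I : R -> Prop) (a : R) : R -> Prop := fun x => I (a * x).

(* Gabriel filter of left ideals (Stenstrom, axioms T1-T4, nonempty). *)
Definition left_Gabriel_filter (F : (R -> Prop) -> Prop) : Prop :=
  (forall I, F I -> is_left_ideal I) /\
  [/\ F (@pfull R),
      (forall I J, F I -> is_left_ideal J -> psubset I J -> F J),
      (forall I J, F I -> F J -> F (pinter I J)),
      (forall I a, F I -> F (lcolon I a)) &
      (forall I J, is_left_ideal I -> F J ->
          (forall a, J a -> F (lcolon I a)) -> F I)].

Definition right_Gabriel_filter (F : (R -> Prop) -> Prop) : Prop :=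
  (forall I, F I -> is_right_ideal I) /\
  [/\ F (@pfull R),
      (forall I J, F I -> is_right_ideal J -> psubset I J -> F J),
      (forall I J, F I -> F J -> F (pinter I J)),
      (forall I a, F I -> F (rcolon I a)) &
      (forall I J, is_right_ideal I -> F J ->
          (forall a, J a -> F (rcolon I a)) -> F I)].

Definition is_higher_derivation (d : nat -> R -> R) : Prop :=
  [/\ (forall r, d 0%N r = r),
      (forall n r s, d n (r + s) = d n r + d n s) &
      (forall n r s, d n (r * s) = \sum_(i < n.+1) d i r * d (n - i)%N s)].
End RingSide.

(* The enveloping ring E = R (x)_Z R^op, given by its universal property:
   iota a b stands for a (x) b. *)
Definition biadditive (R : pzRingType) (A : zmodType) (f : R -> R -> A) : Prop :=
  (forall a a' b, f (a + a') b = f a b + f a' b) /\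
  (forall a b b', f a (b + b') = f a b + f a b').

Definition is_additive (A B : zmodType) (g : A -> B) : Prop :=
  forall x y, g (x + y) = g x + g y.

Definition is_enveloping_tensor (R E : pzRingType) (iota : R -> R -> E) : Prop :=
  [/\ biadditive iota,
      iota 1 1 = 1,
      (* (a (x) b)(c (x) d) = ac (x) (b *_op d) = ac (x) db *)
      (forall a b c d, iota a b * iota c d = iota (a * c) (d * b)) &
      (forall (A : zmodType) (f : R -> R -> A), biadditive f ->
         exists g : E -> A,
           [/\ is_additive g, (forall a b, g (iota a b) = f a b) &
               (forall g' : E -> A, is_additive g' ->
                  (forall a b, g' (iota a b) = f a b) -> forall x, g' x = g x)])].

Definition is_induced_hder (R E : pzRingType) (iota : R -> R -> E)
    (d : nat -> R -> R) (dbar : nat -> E -> E) : Prop :=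
  (forall n, is_additive (dbar n)) /\
  (forall n a b, dbar n (iota a b) = \sum_(i < n.+1) iota (d i a) (d (n - i)%N b)).

(* Bimodules = right E-modules = left E^c-modules. *)
Section Bimod.
Variables (R E : pzRingType) (iota : R -> R -> E).

Definition eact (M : lmodType E^c) (m : M) (e : E) : M := (e : E^c) *: m.
Definition ract (M : lmodType E^c) (m : M) (r : R) : M := eact m (iota r 1).
Definition lact (M : lmodType E^c) (r : R) (m : M) : M := eact m (iota 1 r).

Definition is_Delta_hder (d : nat -> R -> R) (M : lmodType E^c)
    (D : nat -> M -> M) : Prop :=
  [/\ (forall x, D 0%N x = x),
      (forall n, is_additive (D n)),
      (forall n x r, D n (ract x r) = \sum_(i < n.+1) ract (D i x) (d (n - i)%N r)) &
      (forall n x r, D n (lact r x) = \sum_(i < n.+1) lact (d i r) (D (n - i)%N x))].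

Definition is_right_idealE (K : E -> Prop) : Prop :=
  [/\ K 0, (forall x y, K x -> K y -> K (x - y)) & (forall a x, K x -> K (x * a))].

(* The symmetric filter lFr: right ideals K of E such that the bimodule E/K
   is torsion as a left module (w.r.t. Fl) and as a right module (w.r.t. Fr).
   The left annihilator of the class of x in E/K is {r | x (1 (x) r) \in K},
   its right annihilator is {r | x (r (x) 1) \in K}. *)
Definition sym_filter (Fl Fr : (R -> Prop) -> Prop) (K : E -> Prop) : Prop :=
  is_right_idealE K /\
  (forall x, Fl (fun r => K (x * iota 1 r)) /\ Fr (fun r => K (x * iota r 1))).

Section Quot.
Variables (Fl Fr : (R -> Prop) -> Prop) (M : lmodType E^c).

Definition sym_torsion (m : M) : Prop :=
  sym_filter Fl Fr (fun a => eact m a = 0).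

(* f : E -> M is a lift of a homomorphism of right E-modules K -> M/lTr(M). *)
Definition hom_lift (K : E -> Prop) (f : E -> M) : Prop :=
  (forall x y, K x -> K y -> sym_torsion (f (x + y) - f x - f y)) /\
  (forall x a, K x -> sym_torsion (f (x * a) - eact (f x) a)).

(* Two elements of Hom(K,M/T(M)) and Hom(K',M/T(M)) have the same image in
   the direct limit iff they agree on some K'' in lFr, K'' <= K /\ K'. *)
Definition germ_eq (K : E -> Prop) (f : E -> M) (K' : E -> Prop) (f' : E -> M) : Prop :=
  exists K'', [/\ sym_filter Fl Fr K'', psubset K'' (pinter K K') &
                  forall x, K'' x -> sym_torsion (f x - f' x)].

(* L (with phi K f = the image of [f] in Hom(K, M/T(M))) is the symmetric
   module of quotients lM_r = lim_{K in lFr} Hom(K, M/lTr(M)), with its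
   canonical right E-module (= R-bimodule) structure. *)
Definition is_sym_module_of_quotients (L : lmodType E^c)
    (phi : (E -> Prop) -> (E -> M) -> L) : Prop :=
  [/\ (forall K f K' f', sym_filter Fl Fr K -> hom_lift K f ->
         sym_filter Fl Fr K' -> hom_lift K' f' ->
         (phi K f = phi K' f' <-> germ_eq K f K' f')),
      (forall y : L, exists K f, [/\ sym_filter Fl Fr K, hom_lift K f & phi K f = y]),
      (forall K f K' f', sym_filter Fl Fr K -> hom_lift K f ->
         sym_filter Fl Fr K' -> hom_lift K' f' ->
         phi K f + phi K' f' = phi (pinter K K') (fun x => f x + f' x)) &
      (forall K f a, sym_filter Fl Fr K -> hom_lift K f ->
         eact (phi K f) a = phi (fun x => K (a * x)) (fun x => f (a * x)))].

Definition qmap (L : lmodType E^c) (phi : (E -> Prop) -> (E -> M) -> L) (m : M) : L :=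
  phi (@pfull E) (fun x => eact m x).

End Quot.
End Bimod.

(* The induced family dbar is a higher derivation of E = R (x) R^op, as one checks
   on pure tensors a (x) 1 and 1 (x) b, and a Delta-higher derivation of a bimodule
   is the same as a family obeying the Leibniz rule for the right E-action.
   (1) By induction on n and axiom T4, {x | dbar_i x \in I for i <= n} stays in
   the symmetric filter.
   (2) D preserves torsion, hence acts on the image of q.  For y in the module of
   quotients, the x with y x in q(M) form an ideal of the filter; on the smaller
   ideal of the x all of whose iterated dbar-images have this property, the
   Leibniz rule determines (Dbar_n y) x recursively, and these values form a
   homomorphism into M/T(M), i.e. an element Dbar_n y.  Uniqueness holds because
   the module of quotients is torsion-free.
   (3) q12 (D1_n y) and D2_n (q12 y) act on a dense ideal by the same recursion. *)

From mathcomp Require Import all_boot all_algebra zify.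
From Stdlib Require Import FunctionalExtensionality PropExtensionality ClassicalEpsilon.
Import GRing.Theory.

Set Implicit Arguments.
Unset Strict Implicit.
Unset Printing Implicit Defensive.

Local Open Scope ring_scope.

Section Sums.
Variable V : zmodType.

Lemma sum_ord_rev n (F : nat -> V) :
  \sum_(i < n.+1) F i = \sum_(i < n.+1) F (n - i)%N.
Proof. by rewrite (reindex_inj rev_ord_inj) /=; apply: eq_bigr => i _; rewrite subSS. Qed.

Lemma sum_antidiagonals n (F : nat -> nat -> V) :
  \sum_(m < n.+1) \sum_(j < m.+1) F j (m - j)%N =
  \sum_(j < n.+1) \sum_(k < (n - j).+1) F j k.
Proof.
elim: n => [|n IH]; first by rewrite !big_ord1.
rewrite big_ord_recr /= IH.
rewrite [RHS](eq_bigr (fun j : 'I_n.+2 =>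
  \sum_(k < (n.+1 - j)%N) F j k + F j (n.+1 - j)%N)) => [|j _]; last first.
  by rewrite big_ord_recr.
rewrite big_split /= [in RHS]big_ord_recr /= subnn big_ord0 addr0.
by congr (_ + _); apply: eq_bigr => j _; rewrite subSn // -ltnS.
Qed.

Lemma sum_antidiagonals_swap n (F : nat -> nat -> V) :
  \sum_(i < n.+1) \sum_(j < (n - i).+1) F i j =
  \sum_(j < n.+1) \sum_(i < (n - j).+1) F i j.
Proof.
rewrite -sum_antidiagonals -(sum_antidiagonals n (fun j i => F i j)).
apply: eq_bigr => m _; rewrite (sum_ord_rev _ (fun j => F j (m - j)%N)).
by apply: eq_bigr => j _; rewrite subKn // -ltnS.
Qed.

End Sums.

Section Additive.
Variables (A B : zmodType) (g : A -> B).
Hypothesis g_add : is_additive g.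

Lemma additive0 : g 0 = 0.
Proof. by apply: (@addrI _ (g 0)); rewrite -g_add !addr0. Qed.

Lemma additiveN x : g (- x) = - g x.
Proof. by apply: (@addrI _ (g x)); rewrite -g_add !subrr additive0. Qed.

Lemma additiveB x y : g (x - y) = g x - g y.
Proof. by rewrite g_add additiveN. Qed.

Lemma additive_sum n (F : 'I_n -> A) : g (\sum_(i < n) F i) = \sum_(i < n) g (F i).
Proof. exact: (big_morph g g_add additive0). Qed.

End Additive.

Section RightAction.
Variables (E : pzRingType) (M : lmodType E^c).

Lemma eactA (m : M) x y : eact m (x * y) = eact (eact m x) y.
Proof. exact: (esym (scalerA _ _ _)). Qed.

Lemma eactDl (m m' : M) e : eact (m + m') e = eact m e + eact m' e.
Proof. exact: scalerDr. Qed.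

Lemma eactDr (m : M) e e' : eact m (e + e') = eact m e + eact m e'.
Proof. exact: scalerDl. Qed.

Lemma eact0l e : eact (0 : M) e = 0.
Proof. exact: scaler0. Qed.

Lemma eact0r (m : M) : eact m 0 = 0.
Proof. exact: scale0r. Qed.

Lemma eactNl (m : M) e : eact (- m) e = - eact m e.
Proof. exact: scalerN. Qed.

Lemma eactBl (m m' : M) e : eact (m - m') e = eact m e - eact m' e.
Proof. exact: scalerBr. Qed.

Lemma eactBr (m : M) e e' : eact m (e - e') = eact m e - eact m e'.
Proof. exact: scalerBl. Qed.

Lemma eact_suml n (F : 'I_n -> M) e :
  eact (\sum_(i < n) F i) e = \sum_(i < n) eact (F i) e.
Proof. exact: scaler_sumr. Qed.

Lemma eact_sumr n (F : 'I_n -> E) (m : M) :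
  eact m (\sum_(i < n) F i) = \sum_(i < n) eact m (F i).
Proof. exact: scaler_suml. Qed.

End RightAction.

Section RightIdeals.
Variables (E : pzRingType) (K : E -> Prop).
Hypothesis HK : is_right_idealE K.

Lemma rideal0 : K 0.
Proof. by case: HK. Qed.

Lemma ridealB x y : K x -> K y -> K (x - y).
Proof. by case: HK => _ KB _; apply: KB. Qed.

Lemma ridealD x y : K x -> K y -> K (x + y).
Proof. by move=> Kx Ky; have := ridealB Kx (ridealB rideal0 Ky); rewrite sub0r opprK. Qed.

Lemma ridealM x a : K x -> K (x * a).
Proof. by case: HK => _ _ KM; apply: KM. Qed.

Lemma rideal_sum n (F : 'I_n -> E) : (forall i, K (F i)) -> K (\sum_(i < n) F i).
Proof. by move=> KF; elim/big_ind: _ => //; [apply: rideal0 | apply: ridealD]. Qed.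

Lemma rideal_colon a : is_right_idealE (fun x => K (a * x)).
Proof.
split=> [|x y Kx Ky|b x Kx]; first by rewrite mulr0; apply: rideal0.
  by rewrite mulrBr; apply: ridealB.
by rewrite mulrA; apply: ridealM.
Qed.

End RightIdeals.

Lemma ann_rideal (E : pzRingType) (M : lmodType E^c) (m : M) :
  is_right_idealE (fun a => eact m a = 0).
Proof.
split; first exact: eact0r.
  by move=> x y mx my; rewrite eactBr mx my subrr.
by move=> a x mx; rewrite eactA mx eact0l.
Qed.

Lemma ext_transport (T : Type) (P : (T -> Prop) -> Prop) (A B : T -> Prop) :
  P A -> (forall x, A x <-> B x) -> P B.
Proof.
move=> PA AB; suff -> : B = A by [].
by apply: functional_extensionality => x; apply: propositional_extensionality; split=> /AB.
Qed.

Section EnvelopingRing.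
Variables (R E : pzRingType) (iota : R -> R -> E).
Hypothesis Hiota : is_enveloping_tensor iota.

Lemma iotaDl a a' b : iota (a + a') b = iota a b + iota a' b.
Proof. by case: Hiota => [[]]. Qed.

Lemma iotaDr a b b' : iota a (b + b') = iota a b + iota a b'.
Proof. by case: Hiota => [[]]. Qed.

Lemma iotaM a b c e : iota a b * iota c e = iota (a * c) (e * b).
Proof. by case: Hiota. Qed.

Lemma iota_split a b : iota a 1 * iota 1 b = iota a b.
Proof. by rewrite iotaM !mulr1. Qed.

Lemma iota0l b : iota 0 b = 0.
Proof. exact: (additive0 (fun a a' => iotaDl a a' b)). Qed.

Lemma iota0r a : iota a 0 = 0.
Proof. exact: (additive0 (iotaDr a)). Qed.

Lemma iota_suml n (F : 'I_n -> R) b :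
  iota (\sum_(i < n) F i) b = \sum_(i < n) iota (F i) b.
Proof. exact: (additive_sum (fun a a' => iotaDl a a' b)). Qed.

Lemma iota_sumr n (F : 'I_n -> R) a :
  iota a (\sum_(i < n) F i) = \sum_(i < n) iota a (F i).
Proof. exact: (additive_sum (iotaDr a)). Qed.

(* Uniqueness in the universal property, applied to the zero biadditive map. *)
Lemma tensor_ext (A : zmodType) (g g' : E -> A) :
  is_additive g -> is_additive g' ->
  (forall a b, g (iota a b) = g' (iota a b)) -> forall x, g x = g' x.
Proof.
move=> g_add g'_add eq_gg' x; apply/eqP; rewrite -subr_eq0; apply/eqP.
have h_add : is_additive (fun x => g x - g' x).
  by move=> u v; rewrite g_add g'_add addrACA opprD.
have zero_biadd : biadditive (fun (_ : R) (_ : R) => (0 : A)).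
  by split=> *; rewrite addr0.
case: Hiota => _ _ _ /(_ A _ zero_biadd) [g0 [_ _ g0_unique]].
rewrite (g0_unique _ h_add) => [|a b]; last by rewrite eq_gg' subrr.
by symmetry; apply: g0_unique => [u v|]; rewrite ?addr0.
Qed.

Section HigherDerivation.
Variable d : nat -> R -> R.
Hypothesis Hd : is_higher_derivation d.
Variable dbar : nat -> E -> E.
Hypothesis Hdbar : is_induced_hder iota d dbar.

Lemma hder0 r : d 0%N r = r.
Proof. by case: Hd. Qed.

Lemma hderM n r s : d n (r * s) = \sum_(i < n.+1) d i r * d (n - i) s.
Proof. by case: Hd. Qed.

(* From d_(n+1)(1) = d_(n+1)(1 * 1) = 2 d_(n+1)(1) + (terms killed by induction). *)
Lemma hderS1 n : d n.+1 1 = 0.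
Proof.
elim/ltn_ind: n => n IH; have := hderM n.+1 1 1.
rewrite mulr1 big_ord_recr big_ord_recl /= subn0 subnn hder0 mul1r mulr1.
rewrite big1 ?addr0 => [h|i _]; first by apply: (@addrI _ (d n.+1 1)); rewrite addr0 -h.
by rewrite /bump /= IH // mul0r.
Qed.

Lemma dbar_add n : is_additive (dbar n).
Proof. by case: Hdbar. Qed.

Lemma dbar_iota n a b :
  dbar n (iota a b) = \sum_(i < n.+1) iota (d i a) (d (n - i) b).
Proof. by case: Hdbar. Qed.

Lemma dbar0 x : dbar 0%N x = x.
Proof.
apply: (tensor_ext (dbar_add 0%N)) => // a b.
by rewrite dbar_iota big_ord1 !hder0.
Qed.

Lemma dbar_iotal n r : dbar n (iota r 1) = iota (d n r) 1.
Proof.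
rewrite dbar_iota big_ord_recr /= subnn hder0 big1 ?add0r // => i _.
by rewrite -(subnSK (ltn_ord i)) hderS1 iota0r.
Qed.

Lemma dbar_iotar n r : dbar n (iota 1 r) = iota 1 (d n r).
Proof.
rewrite dbar_iota big_ord_recl /= subn0 hder0 big1 ?addr0 // => i _.
by rewrite hderS1 iota0l.
Qed.

Definition dbar_leibniz (x : E) :=
  forall n y, dbar n (x * y) = \sum_(i < n.+1) dbar i x * dbar (n - i) y.

Lemma dbar_leibniz_tensor x :
  (forall n a b, dbar n (x * iota a b) =
     \sum_(i < n.+1) dbar i x * dbar (n - i) (iota a b)) -> dbar_leibniz x.
Proof.
move=> Hx n; apply: tensor_ext => // [u v|u v]; first by rewrite mulrDr dbar_add.
by rewrite -big_split; apply: eq_bigr => i _; rewrite dbar_add mulrDr.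
Qed.

Lemma dbar_leibnizM x1 x2 :
  dbar_leibniz x1 -> dbar_leibniz x2 -> dbar_leibniz (x1 * x2).
Proof.
move=> L1 L2 n y; rewrite -mulrA L1.
pose F i j := dbar i x1 * dbar j x2 * dbar (n - i - j) y.
rewrite (eq_bigr (fun i : 'I_n.+1 => \sum_(j < (n - i).+1) F i j)) => [|i _].
  rewrite -sum_antidiagonals; apply: eq_bigr => k _.
  rewrite L1 mulr_suml; apply: eq_bigr => i _; rewrite /F.
  by have := ltn_ord i; have := ltn_ord k => ? ?; congr (_ * dbar _ y); lia.
by rewrite L2 mulr_sumr; apply: eq_bigr => j _; rewrite mulrA.
Qed.

Lemma dbar_leibniz_iotal a : dbar_leibniz (iota a 1).
Proof.
apply: dbar_leibniz_tensor => n c e; rewrite iotaM mulr1 dbar_iota.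
pose F i w := iota (d i a * d w c) (d (n - i - w) e).
rewrite [RHS](eq_bigr (fun i : 'I_n.+1 => \sum_(w < (n - i).+1) F i w)) => [|i _].
  rewrite -sum_antidiagonals; apply: eq_bigr => k _.
  rewrite hderM iota_suml; apply: eq_bigr => i _; rewrite /F.
  by have := ltn_ord i; have := ltn_ord k => ? ?; congr (iota _ (d _ e)); lia.
rewrite dbar_iotal dbar_iota mulr_sumr.
by apply: eq_bigr => w _; rewrite iotaM mulr1.
Qed.

Lemma dbar_leibniz_iotar b : dbar_leibniz (iota 1 b).
Proof.
apply: dbar_leibniz_tensor => n c e; rewrite iotaM mul1r dbar_iota.
pose F i w := iota (d w c) (d (n - i - w) e * d i b).
rewrite [RHS](eq_bigr (fun i : 'I_n.+1 => \sum_(w < (n - i).+1) F i w)) => [|i _].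
  rewrite sum_antidiagonals_swap; apply: eq_bigr => k _.
  rewrite hderM iota_sumr (sum_ord_rev _ (fun i => F i k)).
  apply: eq_bigr => i _; rewrite /F.
  by have := ltn_ord i; have := ltn_ord k => ? ?; congr (iota _ (d _ e * d _ b)); lia.
rewrite dbar_iotar dbar_iota mulr_sumr.
by apply: eq_bigr => w _; rewrite iotaM mul1r.
Qed.

Lemma dbarM x y n : dbar n (x * y) = \sum_(i < n.+1) dbar i x * dbar (n - i) y.
Proof.
move: x; apply: tensor_ext => [u v|u v|a b]; first by rewrite mulrDl dbar_add.
  by rewrite -big_split; apply: eq_bigr => i _; rewrite dbar_add mulrDl.
rewrite -iota_split; apply: dbar_leibnizM.
  exact: dbar_leibniz_iotal.
exact: dbar_leibniz_iotar.
Qed.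

Section DeltaHigherDerivation.
Variables (M : lmodType E^c) (D : nat -> M -> M).

Definition eact_leibniz (e : E) := forall n m,
  D n (eact m e) = \sum_(i < n.+1) eact (D i m) (dbar (n - i) e).

Lemma eact_leibnizM e1 e2 :
  eact_leibniz e1 -> eact_leibniz e2 -> eact_leibniz (e1 * e2).
Proof.
move=> L1 L2 n m; rewrite eactA L2.
pose F j k := eact (D j m) (dbar k e1 * dbar (n - j - k) e2).
rewrite (eq_bigr (fun i : 'I_n.+1 => \sum_(j < i.+1) F j (i - j)%N)) => [|i _].
  rewrite sum_antidiagonals; apply: eq_bigr => k _.
  rewrite dbarM eact_sumr; apply: eq_bigr => i _; rewrite /F.
  by have := ltn_ord i; have := ltn_ord k => ? ?; congr (eact _ (_ * dbar _ e2)); lia.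
rewrite L1 eact_suml; apply: eq_bigr => j _; rewrite -eactA /F.
by have := ltn_ord i; have := ltn_ord j => ? ?; congr (eact _ (_ * dbar _ e2)); lia.
Qed.

Lemma is_Delta_hderE : is_Delta_hder iota d D <->
  [/\ (forall m, D 0%N m = m), (forall n, is_additive (D n)) &
      (forall n m e, D n (eact m e) = \sum_(i < n.+1) eact (D i m) (dbar (n - i) e))].
Proof.
split=> [[D0 D_add Dr Dl]|[D0 D_add De]]; last first.
  split=> // n m r; rewrite /ract /lact De; first by apply: eq_bigr => i _; rewrite dbar_iotal.
  rewrite (sum_ord_rev _ (fun i => eact (D i m) (dbar (n - i) (iota 1 r)))).
  by apply: eq_bigr => i _; rewrite dbar_iotar subKn // -ltnS.
split=> // n m; apply: tensor_ext => [u v|u v|a b]; first by rewrite eactDr D_add.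
  by rewrite -big_split; apply: eq_bigr => i _; rewrite dbar_add eactDr.
rewrite -iota_split; apply: eact_leibnizM => {}n {}m.
  by rewrite [LHS]Dr; apply: eq_bigr => i _; rewrite dbar_iotal.
rewrite [LHS]Dl (sum_ord_rev _ (fun i => eact (D i m) (dbar (n - i) (iota 1 b)))).
by apply: eq_bigr => i _; rewrite dbar_iotar subKn // -ltnS.
Qed.

Hypothesis HD : is_Delta_hder iota d D.

Lemma Delta_hder0 m : D 0%N m = m.
Proof. by case: (is_Delta_hderE.1 HD). Qed.

Lemma Delta_hder_add n : is_additive (D n).
Proof. by case: (is_Delta_hderE.1 HD). Qed.

Lemma Delta_hder_eact n m e :
  D n (eact m e) = \sum_(i < n.+1) eact (D i m) (dbar (n - i) e).
Proof. by case: (is_Delta_hderE.1 HD). Qed.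

End DeltaHigherDerivation.

Lemma left_ann_ideal (K : E -> Prop) x :
  is_right_idealE K -> is_left_ideal (fun r => K (x * iota 1 r)).
Proof.
move=> HK; split=> [|r s Kr Ks|r s Ks]; first by rewrite iota0r mulr0; apply: rideal0.
  by rewrite (additiveB (iotaDr 1)) mulrBr; apply: ridealB.
by rewrite -(mul1r 1) -iotaM mulrA; apply: ridealM.
Qed.

Lemma right_ann_ideal (K : E -> Prop) x :
  is_right_idealE K -> is_right_ideal (fun r => K (x * iota r 1)).
Proof.
move=> HK; split=> [|r s Kr Ks|r s Ks]; first by rewrite iota0l mulr0; apply: rideal0.
  by rewrite (additiveB (fun a a' => iotaDl a a' 1)) mulrBr; apply: ridealB.
by rewrite -(mulr1 1) -iotaM mulrA; apply: ridealM.
Qed.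

Section SymmetricFilter.
Variables Fl Fr : (R -> Prop) -> Prop.
Hypotheses (HFl : left_Gabriel_filter Fl) (HFr : right_Gabriel_filter Fr).
Local Notation lF := (sym_filter iota Fl Fr).

Lemma sym_filter_rideal K : lF K -> is_right_idealE K.
Proof. by case. Qed.

Lemma sym_filter_full : lF (@pfull E).
Proof.
case: HFl => _ [Hl _ _ _ _]; case: HFr => _ [Hr _ _ _ _].
by split; [split | move=> x; split].
Qed.

Lemma sym_filter_up K K' : lF K -> is_right_idealE K' -> psubset K K' -> lF K'.
Proof.
case: HFl => _ [_ Hl _ _ _]; case: HFr => _ [_ Hr _ _ _].
move=> [HK FK] HK' sub; split=> // x; have [FlK FrK] := FK x; split.
  by apply: (Hl _ _ FlK); [exact: left_ann_ideal | move=> r /sub].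
by apply: (Hr _ _ FrK); [exact: right_ann_ideal | move=> r /sub].
Qed.

Lemma sym_filter_cap K K' : lF K -> lF K' -> lF (pinter K K').
Proof.
case: HFl => _ [_ _ Hl _ _]; case: HFr => _ [_ _ Hr _ _].
move=> [HK FK] [HK' FK']; split.
  split; first by split; apply: rideal0.
    by move=> x y [? ?] [? ?]; split; apply: ridealB.
  by move=> a x [? ?]; split; apply: ridealM.
by move=> x; have [? ?] := FK x; have [? ?] := FK' x; split; [apply: Hl | apply: Hr].
Qed.

Lemma sym_filter_colon K a : lF K -> lF (fun x => K (a * x)).
Proof.
move=> [HK FK]; split=> [|x]; first exact: rideal_colon.
have [FlK FrK] := FK (a * x).
by split; [apply: (ext_transport FlK) | apply: (ext_transport FrK)] => r; rewrite mulrA.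
Qed.

(* Axiom T4 of both Gabriel filters, applied to the annihilators of each [x] modulo [K]. *)
Lemma sym_filter_glue K K' : is_right_idealE K -> lF K' ->
  (forall a, K' a -> lF (fun x => K (a * x))) -> lF K.
Proof.
case: HFl => _ [_ _ _ _ Tl]; case: HFr => _ [_ _ _ _ Tr].
move=> HK [HK' FK'] HKa; split=> // x; have [FlK' FrK'] := FK' x; split.
  apply: (Tl _ _ (left_ann_ideal x HK) FlK') => r /HKa [_ /(_ 1) [FlKr _]].
  by apply: (ext_transport FlKr) => s; rewrite mul1r -mulrA iotaM mul1r.
apply: (Tr _ _ (right_ann_ideal x HK) FrK') => r /HKa [_ /(_ 1) [_ FrKr]].
by apply: (ext_transport FrKr) => s; rewrite mul1r -mulrA iotaM mulr1.
Qed.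

Lemma sym_filter_bigcap (P : nat -> E -> Prop) n : (forall k, lF (P k)) ->
  lF (fun x => forall k, (k <= n)%N -> P k x).
Proof.
move=> FP; elim: n => [|n IH].
  by apply: (ext_transport (FP 0%N)) => x; split=> [Px k /[!leqn0] /eqP ->|]; last apply.
apply: (ext_transport (sym_filter_cap IH (FP n.+1))) => x; split.
  by move=> [Px Pn] k; rewrite leq_eqVlt => /predU1P [-> //|]; apply: Px.
by move=> Px; split=> [k kn|]; apply: Px => //; apply: leqW.
Qed.

Definition dbar_pre (K : E -> Prop) n := fun x => forall i, (i <= n)%N -> K (dbar i x).

Lemma dbar_pre_rideal K n : is_right_idealE K -> is_right_idealE (dbar_pre K n).
Proof.
move=> HK; split=> [i _|x y Kx Ky i ni|a x Kx i ni].
- by rewrite (additive0 (dbar_add i)); apply: rideal0.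
- by rewrite (additiveB (dbar_add i)); apply: ridealB => //; [exact: Kx ni | exact: Ky ni].
rewrite dbarM; apply: rideal_sum => // j; apply: ridealM => //.
by apply: (Kx j); rewrite (leq_trans _ ni) // -ltnS.
Qed.

(* Induction on [n] through [sym_filter_glue]: by the Leibniz rule, for [a] in
   [dbar_pre K n] the colon of [dbar_pre K n.+1] by [a] contains that of [K]
   by [dbar n.+1 a]. *)
Lemma sym_filter_dbar_pre K n : lF K -> lF (dbar_pre K n).
Proof.
move=> FK; have HK := sym_filter_rideal FK.
elim: n => [|n IH].
  apply: (sym_filter_up FK (dbar_pre_rideal 0 HK)) => x Kx i.
  by rewrite leqn0 => /eqP ->; rewrite dbar0.
apply: (sym_filter_glue (dbar_pre_rideal _ HK) IH) => a Ka.
apply: (sym_filter_up (sym_filter_colon (dbar n.+1 a) FK)).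
  exact: rideal_colon (dbar_pre_rideal _ HK) _.
move=> x Kx i ni; rewrite dbarM; apply: rideal_sum => // j.
have := ltn_ord j; rewrite ltnS => ji.
have [jn|nj] := leqP j n; first by apply: ridealM => //; apply: Ka.
have ej : nat_of_ord j = n.+1 by apply/eqP; rewrite eqn_leq nj (leq_trans ji ni).
have -> : (i - j = 0)%N by apply/eqP; rewrite subn_eq0 ej.
by rewrite dbar0 ej.
Qed.

(* [x] is in [dbar_pre_iter N B j] iff every composite of at most [j] maps
   [dbar i], [i <= N], sends [x] into [B]. *)
Definition dbar_pre_iter N B j := iter j (dbar_pre ^~ N) B.

Lemma dbar_pre_iter_rideal N B j :
  is_right_idealE B -> is_right_idealE (dbar_pre_iter N B j).
Proof. by move=> HB; elim: j => //= j IH; apply: dbar_pre_rideal. Qed.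

Lemma sym_filter_dbar_pre_iter N B j : lF B -> lF (dbar_pre_iter N B j).
Proof. by move=> FB; elim: j => //= j IH; apply: sym_filter_dbar_pre. Qed.

Lemma dbar_pre_iter_le N B j k x :
  (j <= k)%N -> dbar_pre_iter N B k x -> dbar_pre_iter N B j x.
Proof.
move=> /subnK <-; elim: (k - j)%N x => //= l IH x Bx.
by apply: IH; have := Bx 0%N (leq0n N); rewrite dbar0.
Qed.

Lemma dbar_pre_iter_base N B j x : dbar_pre_iter N B j x -> B x.
Proof. exact: (@dbar_pre_iter_le N B 0%N j). Qed.

Lemma dbar_pre_iter_mono N (B B' : E -> Prop) j :
  psubset B B' -> psubset (dbar_pre_iter N B j) (dbar_pre_iter N B' j).
Proof. by move=> sub; elim: j => //= j IH x Bx i ni; apply/IH/Bx. Qed.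

Lemma dbar_pre_iter_dbar N B k j x i : dbar_pre_iter N B k x ->
  (j < k)%N -> (i <= N)%N -> dbar_pre_iter N B j (dbar i x).
Proof.
case: k => // k Bx jk ni; apply: (@dbar_pre_iter_le _ _ _ k) => //.
exact: Bx.
Qed.

Lemma dbar_pre_iter_dbar_base N B k x i : dbar_pre_iter N B k x ->
  (i <= k)%N -> (i <= N)%N -> B (dbar i x).
Proof.
case: i => [|i] Bx ik iN; first by rewrite dbar0; apply: dbar_pre_iter_base Bx.
exact: dbar_pre_iter_base (dbar_pre_iter_dbar Bx ik iN).
Qed.

Section Quotient.
Variables (M L : lmodType E^c) (phi : (E -> Prop) -> (E -> M) -> L).
Hypothesis Hphi : is_sym_module_of_quotients iota Fl Fr phi.
Local Notation tor := (sym_torsion iota Fl Fr (M := M)).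
Local Notation hom := (hom_lift iota Fl Fr (M := M)).
Local Notation q := (qmap phi).

Lemma torsion0 : tor 0.
Proof. by apply: (sym_filter_up sym_filter_full (ann_rideal 0)) => x _; apply: eact0l. Qed.

Lemma torsion_eq0 m : m = 0 -> tor m.
Proof. by move->; apply: torsion0. Qed.

Lemma torsionD m m' : tor m -> tor m' -> tor (m + m').
Proof.
move=> Tm Tm'; apply: (sym_filter_up (sym_filter_cap Tm Tm') (ann_rideal _)).
by move=> x [mx m'x]; rewrite eactDl mx m'x addr0.
Qed.

Lemma torsionN m : tor m -> tor (- m).
Proof. by move=> Tm; apply: (sym_filter_up Tm (ann_rideal _)) => x mx; rewrite eactNl mx oppr0. Qed.

Lemma torsion_sum n (F : 'I_n -> M) : (forall i, tor (F i)) -> tor (\sum_(i < n) F i).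
Proof. by move=> TF; elim/big_ind: _ => //; [apply: torsion0 | apply: torsionD]. Qed.

Lemma torsion_eact m e : tor m -> tor (eact m e).
Proof. by move=> /(sym_filter_colon e) Tm; apply: (ext_transport Tm) => x; rewrite eactA. Qed.

Lemma torsion_glue m K : lF K -> (forall e, K e -> tor (eact m e)) -> tor m.
Proof.
move=> FK Tme; apply: (sym_filter_glue (ann_rideal m) FK) => a /Tme Tma.
by apply: (ext_transport Tma) => x; rewrite eactA.
Qed.

Lemma hom_liftD K f K' f' : hom K f -> hom K' f' -> hom (pinter K K') (fun x => f x + f' x).
Proof.
move=> [fD fM] [f'D f'M]; split=> [x y [Kx K'x] [Ky K'y]|x a [Kx K'x]].
  have := torsionD (fD _ _ Kx Ky) (f'D _ _ K'x K'y).
  by rewrite (opprD (f x)) (opprD (f y)) (addrACA (f (x + y))) (addrACA (f (x + y) - f x)).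
have := torsionD (fM _ a Kx) (f'M _ a K'x).
by rewrite eactDl opprD addrACA.
Qed.

Lemma hom_lift_full m : hom (@pfull E) (eact m).
Proof.
split=> [x y _ _|x a _]; apply: torsion_eq0; last by rewrite eactA subrr.
by rewrite eactDr addrAC addrK subrr.
Qed.

Lemma hom_lift_colon K f a : is_right_idealE K -> hom K f ->
  hom (fun x => K (a * x)) (fun x => f (a * x)).
Proof.
move=> HK [fD fM]; split=> [x y Kx Ky|x b Kx]; first by rewrite mulrDr; apply: fD.
by rewrite mulrA; apply: fM.
Qed.

Lemma germ_eq_sub K f K' f' K'' : lF K'' -> psubset K'' K -> psubset K'' K' ->
  (forall x, K'' x -> tor (f x - f' x)) -> germ_eq iota Fl Fr K f K' f'.
Proof.
move=> FK'' sK sK' Tff'; exists K''; split=> // x Kx.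
by split; [apply: sK | apply: sK'].
Qed.

Lemma phi_eq K f K' f' : lF K -> hom K f -> lF K' -> hom K' f' ->
  phi K f = phi K' f' <-> germ_eq iota Fl Fr K f K' f'.
Proof. by case: Hphi => phi_eq _ _ _; apply: phi_eq. Qed.

Lemma phi_surj z : exists K f, [/\ lF K, hom K f & phi K f = z].
Proof. by case: Hphi. Qed.

Lemma phiD K f K' f' : lF K -> hom K f -> lF K' -> hom K' f' ->
  phi K f + phi K' f' = phi (pinter K K') (fun x => f x + f' x).
Proof. by case: Hphi => _ _ phiD _; apply: phiD. Qed.

Lemma phi_eact K f a : lF K -> hom K f ->
  eact (phi K f) a = phi (fun x => K (a * x)) (fun x => f (a * x)).
Proof. by case: Hphi => _ _ _; apply. Qed.

Local Hint Resolve sym_filter_full hom_lift_full : core.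

Lemma qmapD : is_additive q.
Proof.
move=> m m'; rewrite /qmap phiD //; apply/phi_eq => //.
- exact: sym_filter_cap.
- exact: hom_liftD.
apply: (germ_eq_sub sym_filter_full) => // x _.
by apply: torsion_eq0; rewrite eactDl subrr.
Qed.

Lemma qmap_eact m a : eact (q m) a = q (eact m a).
Proof.
rewrite /qmap phi_eact //; apply/phi_eq => //.
  exact: hom_lift_colon (sym_filter_rideal sym_filter_full) (hom_lift_full m).
apply: (germ_eq_sub sym_filter_full) => // x _.
by apply: torsion_eq0; rewrite eactA subrr.
Qed.

Lemma qmap_eq m m' : q m = q m' <-> tor (m - m').
Proof.
rewrite phi_eq //; split=> [[K [FK _ Tmm']]|Tmm'].
  by apply: (torsion_glue FK) => e /Tmm'; rewrite eactBl.
apply: (germ_eq_sub sym_filter_full) => // x _.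
by rewrite -eactBl; apply: torsion_eact.
Qed.

Lemma qmap0 : q 0 = 0.
Proof. exact: additive0 qmapD. Qed.

Lemma qmapB m m' : q (m - m') = q m - q m'.
Proof. exact: (additiveB qmapD m m'). Qed.

Lemma qmap_sum n (F : 'I_n -> M) : q (\sum_(i < n) F i) = \sum_(i < n) q (F i).
Proof. exact: (additive_sum qmapD F). Qed.

Lemma qmap_eq0 m : q m = 0 <-> tor m.
Proof. by rewrite -qmap0 qmap_eq subr0. Qed.

Lemma phi_eact_in K f x : lF K -> hom K f -> K x -> eact (phi K f) x = q (f x).
Proof.
move=> FK hf Kx; rewrite phi_eact //; apply/phi_eq => //.
- exact: sym_filter_colon.
- exact: hom_lift_colon (sym_filter_rideal FK) hf.
apply: (germ_eq_sub sym_filter_full) => // [z _|z _]; last by case: hf => _; apply.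
by apply: ridealM => //; apply: sym_filter_rideal.
Qed.

(* Torsion-freeness of the module of quotients. *)
Lemma quot_eq_dense (z z' : L) K : lF K ->
  (forall x, K x -> eact z x = eact z' x) -> z = z'.
Proof.
move=> FK; have [K1 [f1 [FK1 hf1 <-]]] := phi_surj z.
have [K2 [f2 [FK2 hf2 <-]]] := phi_surj z'.
move=> zz'; apply/phi_eq => //; apply: (germ_eq_sub (sym_filter_cap FK (sym_filter_cap FK1 FK2))).
- by move=> x [_ []].
- by move=> x [_ []].
move=> x [Kx [K1x K2x]]; apply/qmap_eq.
by rewrite -(phi_eact_in FK1 hf1 K1x) -(phi_eact_in FK2 hf2 K2x) zz'.
Qed.

Section Extension.
Variable D : nat -> M -> M.
Hypothesis HD : is_Delta_hder iota d D.

Lemma Delta_hder_torsion n m : tor m -> tor (D n m).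
Proof.
elim/ltn_ind: n m => n IH m Tm; apply: (torsion_glue Tm) => e me.
have := Delta_hder_eact HD n m e; rewrite me (additive0 (Delta_hder_add HD n)).
rewrite big_ord_recr /= subnn dbar0 => /esym/eqP; rewrite addrC addr_eq0 => /eqP ->.
by apply/torsionN/torsion_sum => i; apply/torsion_eact/IH.
Qed.

Definition qimg (z : L) := exists m, q m = z.

Definition qmap_inv (z : L) : M := epsilon (inhabits 0) (fun m => q m = z).

Lemma qmap_invK z : qimg z -> q (qmap_inv z) = z.
Proof. exact: epsilon_spec. Qed.

Lemma qimgB z z' : qimg z -> qimg z' -> qimg (z - z').
Proof. by move=> [m <-] [m' <-]; exists (m - m'); rewrite qmapB. Qed.

Lemma qimgD z z' : qimg z -> qimg z' -> qimg (z + z').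
Proof. by move=> [m <-] [m' <-]; exists (m + m'); rewrite qmapD. Qed.

Lemma qimg_eact z e : qimg z -> qimg (eact z e).
Proof. by move=> [m <-]; exists (eact m e); rewrite qmap_eact. Qed.

(* [D] transported along an arbitrary section of [q]; the choice is irrelevant
   because [D] preserves torsion ([Dq_qmap]). *)
Definition Dq n (z : L) := q (D n (qmap_inv z)).

Lemma Dq_qmap n m : Dq n (q m) = q (D n m).
Proof.
apply/qmap_eq; rewrite -(additiveB (Delta_hder_add HD n)).
by apply/Delta_hder_torsion/qmap_eq; rewrite qmap_invK //; exists m.
Qed.

Lemma DqD n z z' : qimg z -> qimg z' -> Dq n (z + z') = Dq n z + Dq n z'.
Proof. by move=> [m <-] [m' <-]; rewrite -qmapD !Dq_qmap (Delta_hder_add HD) qmapD. Qed.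

Lemma Dq0 z : qimg z -> Dq 0%N z = z.
Proof. by move=> [m <-]; rewrite Dq_qmap Delta_hder0. Qed.

Lemma Dq_eact n z a : qimg z ->
  Dq n (eact z a) = \sum_(i < n.+1) eact (Dq i z) (dbar (n - i) a).
Proof.
move=> [m <-]; rewrite qmap_eact Dq_qmap (Delta_hder_eact HD) qmap_sum.
by apply: eq_bigr => i _; rewrite Dq_qmap qmap_eact.
Qed.

Definition qdense (y : L) := fun x => qimg (eact y x).

Lemma qdense_rideal y : is_right_idealE (qdense y).
Proof.
split=> [|x x' yx yx'|a x yx]; rewrite /qdense.
- by rewrite eact0r; exists 0; apply: qmap0.
- by rewrite eactBr; apply: qimgB.
- by rewrite eactA; apply: qimg_eact.
Qed.

Lemma sym_filter_qdense y : lF (qdense y).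
Proof.
have [K [f [FK hf <-]]] := phi_surj y.
apply: (sym_filter_up FK (qdense_rideal _)) => x Kx.
by rewrite /qdense (phi_eact_in FK hf Kx); exists (f x).
Qed.

(* [ext_act y n x] is the value forced on [eact (Dbar n y) x] by the Leibniz rule
   [Dq n (eact y x) = \sum_(j <= n) eact (Dbar j y) (dbar (n - j) x)], solved for
   its last term.  It is computed in [M] by course-of-values recursion:
   [ext_lift_upto y n k] stands for [ext_lift y k] when [k <= n]. *)
Fixpoint ext_lift_upto (y : L) n : nat -> E -> M :=
  if n is n'.+1 then fun k x =>
    if (k <= n')%N then ext_lift_upto y n' k x
    else D k (qmap_inv (eact y x)) - \sum_(j < k) ext_lift_upto y n' j (dbar (k - j) x)
  else fun _ x => D 0%N (qmap_inv (eact y x)).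

Definition ext_lift y n x := ext_lift_upto y n n x.

Definition ext_act y n x := q (ext_lift y n x).

Lemma ext_lift_uptoE y n k : (k <= n)%N -> ext_lift_upto y n k = ext_lift y k.
Proof.
elim: n => [|n IH]; first by rewrite leqn0 => /eqP ->.
by rewrite leq_eqVlt => /predU1P [-> //|]; rewrite ltnS /= => kn; rewrite kn; apply: IH.
Qed.

Lemma ext_actE y n x :
  ext_act y n x = Dq n (eact y x) - \sum_(j < n) ext_act y j (dbar (n - j) x).
Proof.
rewrite /ext_act -qmap_sum -qmapB; congr q; case: n => [|n]; first by rewrite big_ord0 subr0.
rewrite /ext_lift /= ltnn; congr (_ - _); apply: eq_bigr => j _.
by rewrite ext_lift_uptoE // -ltnS.
Qed.

Lemma ext_act_sum y n x :
  \sum_(j < n.+1) ext_act y j (dbar (n - j) x) = Dq n (eact y x).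
Proof. by rewrite big_ord_recr /= subnn dbar0 [ext_act y n x]ext_actE addrC subrK. Qed.

Local Notation dense y N n := (dbar_pre_iter N (qdense y) n).

Lemma dense_rideal y N n : is_right_idealE (dense y N n).
Proof. exact/dbar_pre_iter_rideal/qdense_rideal. Qed.

Lemma ext_act_unique y B N (H : nat -> E -> L) :
  (forall n, (n <= N)%N -> forall x, dbar_pre_iter N B n x ->
     \sum_(j < n.+1) H j (dbar (n - j) x) = Dq n (eact y x)) ->
  forall n, (n <= N)%N -> forall x, dbar_pre_iter N B n x -> H n x = ext_act y n x.
Proof.
move=> Hsum; elim/ltn_ind => n IH nN x Bx.
have := Hsum n nN x Bx; rewrite big_ord_recr /= subnn dbar0 ext_actE => <-.
rewrite [X in _ - X](eq_bigr (fun j : 'I_n => H j (dbar (n - j) x))) => [|j _].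
  by rewrite addrAC subrr add0r.
apply: esym; apply: IH => //; first exact: leq_trans (ltnW (ltn_ord j)) nN.
by apply: (dbar_pre_iter_dbar Bx) => //; rewrite leq_subLR (leq_trans nN) ?leq_addl.
Qed.

Lemma ext_actD y N n : (n <= N)%N -> forall x x', dense y N n x -> dense y N n x' ->
  ext_act y n (x + x') = ext_act y n x + ext_act y n x'.
Proof.
elim/ltn_ind: n => n IH nN x x' yx yx'.
rewrite !ext_actE eactDr DqD; last exact: dbar_pre_iter_base yx'.
  rewrite (eq_bigr (fun j : 'I_n => ext_act y j (dbar (n - j) x) + ext_act y j (dbar (n - j) x'))).
    by rewrite big_split /= opprD addrACA.
  move=> j _; have jN := leq_trans (ltnW (ltn_ord j)) nN.
  have djN : (n - j <= N)%N by rewrite leq_subLR (leq_trans nN) ?leq_addl.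
  rewrite (dbar_add (n - j)) IH //.
    exact: (dbar_pre_iter_dbar yx (ltn_ord j) djN).
  exact: (dbar_pre_iter_dbar yx' (ltn_ord j) djN).
exact: dbar_pre_iter_base yx.
Qed.

Lemma ext_act_big y N n k (F : 'I_k -> E) : (n <= N)%N ->
  (forall i, dense y N n (F i)) ->
  ext_act y n (\sum_(i < k) F i) = \sum_(i < k) ext_act y n (F i).
Proof.
move=> nN; have Hdense := dense_rideal y N n.
elim: k F => [|k IH] F yF.
  rewrite !big_ord0; apply: (@addrI _ (ext_act y n 0)).
  by rewrite -(ext_actD nN) ?addr0 //; apply: rideal0.
by rewrite !big_ord_recr /= (ext_actD nN) ?IH //; apply: rideal_sum.
Qed.

Lemma ext_actM y N n : (n <= N)%N -> forall x a, dense y N n x ->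
  ext_act y n (x * a) = eact (ext_act y n x) a.
Proof.
(* Expand [Dq n (eact y (x * a))] in two ways; the terms of lower order cancel
   by induction. *)
elim/ltn_ind: n => n IH nN x a yx.
pose F j k := eact (ext_act y j (dbar k x)) (dbar (n - j - k) a).
have Dq_xa : Dq n (eact y (x * a)) = \sum_(j < n.+1) \sum_(k < (n - j).+1) F j k.
  rewrite eactA Dq_eact; last exact: dbar_pre_iter_base yx.
  rewrite -sum_antidiagonals; apply: eq_bigr => m _.
  rewrite -ext_act_sum eact_suml; apply: eq_bigr => j _; rewrite /F.
  by have := ltn_ord j; have := ltn_ord m => ? ?; congr (eact _ (dbar _ a)); lia.
have lower j : (j < n)%N ->
    ext_act y j (dbar (n - j) (x * a)) = \sum_(k < (n - j).+1) F j k.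
  move=> jn; have jN : (j <= N)%N := leq_trans (ltnW jn) nN.
  have yxk (k : 'I_(n - j).+1) : dense y N j (dbar k x).
    apply: (dbar_pre_iter_dbar yx) => //.
    by rewrite (leq_trans _ nN) // (leq_trans _ (leq_subr j n)) // -ltnS.
  rewrite dbarM (ext_act_big jN) => [|k]; first by apply: eq_bigr => k _; rewrite IH.
  exact: ridealM (dense_rideal y N j) _ _ (yxk k).
move: (ext_act_sum y n (x * a)); rewrite Dq_xa big_ord_recr /= subnn dbar0.
rewrite (eq_bigr _ (fun (j : 'I_n) _ => lower j (ltn_ord j))) [in RHS]big_ord_recr /= => /addrI ->.
by rewrite subnn big_ord1 /F subnn !dbar0.
Qed.

Definition acts_as_ext_act n y (z : L) :=
  exists K, lF K /\ forall x, K x -> eact z x = ext_act y n x.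

Definition ext_hder n y : L := epsilon (inhabits 0) (acts_as_ext_act n y).

Lemma ext_hder_spec n y : acts_as_ext_act n y (ext_hder n y).
Proof.
apply: epsilon_spec.
pose K := dense y n n; have FK : lF K by apply/sym_filter_dbar_pre_iter/sym_filter_qdense.
have hK : hom K (ext_lift y n).
  split=> [x x' Kx Kx'|x a Kx]; apply/qmap_eq0; rewrite !qmapB -?qmap_eact.
    change (ext_act y n (x + x') - ext_act y n x - ext_act y n x' = 0).
    by rewrite (ext_actD _ Kx Kx') // addrAC addrK subrr.
  change (ext_act y n (x * a) - eact (ext_act y n x) a = 0).
  by rewrite (ext_actM _ _ Kx) // subrr.
by exists (phi K (ext_lift y n)), K; split=> // x Kx; rewrite (phi_eact_in FK hK Kx).
Qed.

Lemma ext_hder_act y N n : (n <= N)%N -> forall x, dense y N n x ->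
  eact (ext_hder n y) x = ext_act y n x.
Proof.
move=> nN x yx; have [K [FK HK]] := ext_hder_spec n y.
apply: (quot_eq_dense (sym_filter_colon x FK)) => w Kxw.
by rewrite -eactA HK // (ext_actM nN _ yx).
Qed.

Lemma ext_hder0 y : ext_hder 0%N y = y.
Proof.
apply: (quot_eq_dense (sym_filter_qdense y)) => x yx.
by rewrite (@ext_hder_act y 0%N 0%N) // ext_actE big_ord0 subr0 Dq0.
Qed.

Lemma ext_act_addl y y' N n : (n <= N)%N ->
  forall x, dbar_pre_iter N (pinter (qdense y) (qdense y')) n x ->
  ext_act (y + y') n x = ext_act y n x + ext_act y' n x.
Proof.
move=> nN x yx; symmetry.
apply: (ext_act_unique (H := fun j x => ext_act y j x + ext_act y' j x)) yx => //.
move=> m mN w /dbar_pre_iter_base [yw y'w].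
by rewrite big_split /= !ext_act_sum eactDl DqD.
Qed.

Lemma ext_hder_add n : is_additive (ext_hder n).
Proof.
move=> y y'; set B := pinter (qdense y) (qdense y').
have FB : lF (dbar_pre_iter n B n).
  by apply/sym_filter_dbar_pre_iter/sym_filter_cap; apply: sym_filter_qdense.
apply: (quot_eq_dense FB) => x Bx.
have yx : dense y n n x by apply: dbar_pre_iter_mono Bx => w [].
have y'x : dense y' n n x by apply: dbar_pre_iter_mono Bx => w [].
have yy'x : dense (y + y') n n x.
  by apply: dbar_pre_iter_mono Bx => w [yw y'w]; rewrite /qdense eactDl; apply: qimgD.
by rewrite eactDl !(ext_hder_act (leqnn n)) // (ext_act_addl (leqnn n) Bx).
Qed.

Definition eact_dense y e n := fun x => forall k, (k <= n)%N -> dense y n n (dbar k e * x).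

Lemma sym_filter_eact_dense y e n : lF (eact_dense y e n).
Proof.
apply: sym_filter_bigcap => k; apply: sym_filter_colon.
by apply/sym_filter_dbar_pre_iter/sym_filter_qdense.
Qed.

Lemma ext_act_eact y e n x : dbar_pre_iter n (eact_dense y e n) n x ->
  ext_act (eact y e) n x = \sum_(i < n.+1) ext_act y i (dbar (n - i) e * x).
Proof.
move=> Bx; symmetry.
apply: (ext_act_unique (H := fun j x => \sum_(i < j.+1) ext_act y i (dbar (j - i) e * x))) Bx => //.
move=> m mn w Bw; pose F i k := ext_act y i (dbar k e * dbar (m - i - k) w).
rewrite -eactA -ext_act_sum.
rewrite (eq_bigr (fun j : 'I_m.+1 => \sum_(i < j.+1) F i (j - i)%N)) => [|j _].
  rewrite sum_antidiagonals; apply: eq_bigr => i _.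
  have im : (i <= m)%N by rewrite -ltnS.
  have iN : (i <= n)%N := leq_trans im mn.
  rewrite dbarM (ext_act_big iN) => [|k]; first by [].
  have := ltn_ord k; rewrite ltnS => kmi.
  have Bk : eact_dense y e n (dbar (m - i - k) w).
    by apply: (dbar_pre_iter_dbar_base Bw); lia.
  by apply: (dbar_pre_iter_le iN); apply: Bk; lia.
apply: eq_bigr => i _; rewrite /F.
by have := ltn_ord i; have := ltn_ord j => ? ?; have -> : (m - i - (j - i) = m - j)%N by lia.
Qed.

Lemma ext_hder_eact n y e :
  ext_hder n (eact y e) = \sum_(i < n.+1) eact (ext_hder i y) (dbar (n - i) e).
Proof.
have FB : lF (dbar_pre_iter n (eact_dense y e n) n).
  exact/sym_filter_dbar_pre_iter/sym_filter_eact_dense.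
apply: (quot_eq_dense FB) => x Bx.
rewrite (@ext_hder_act (eact y e) n n) //; last first.
  apply: dbar_pre_iter_mono Bx => w /(_ 0%N (leq0n n)) /dbar_pre_iter_base.
  by rewrite dbar0 /qdense eactA.
rewrite ext_act_eact // eact_suml; apply: eq_bigr => i _.
have iN : (i <= n)%N by rewrite -ltnS.
rewrite -eactA (ext_hder_act iN) //; apply: (dbar_pre_iter_le iN).
exact: (dbar_pre_iter_base Bx) _ (leq_subr i n).
Qed.

Lemma ext_hder_Delta : is_Delta_hder iota d ext_hder.
Proof.
apply/is_Delta_hderE; split=> [|n|n y e]; [exact: ext_hder0 | exact: ext_hder_add |].
exact: ext_hder_eact.
Qed.

Lemma ext_hder_qmap n m : ext_hder n (q m) = q (D n m).
Proof.
have FK : lF (dense (q m) n n) by apply/sym_filter_dbar_pre_iter/sym_filter_qdense.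
apply: (quot_eq_dense FK) => x qmx; rewrite (ext_hder_act (leqnn n)) // qmap_eact.
symmetry; apply: (ext_act_unique (H := fun j x => q (eact (D j m) x))) qmx => // k _ w _.
by rewrite -qmap_sum -(Delta_hder_eact HD) -Dq_qmap qmap_eact.
Qed.

Lemma Delta_hder_ext_act (D' : nat -> L -> L) : is_Delta_hder iota d D' ->
  (forall n m, D' n (q m) = q (D n m)) ->
  forall y N n, (n <= N)%N -> forall x, dense y N n x -> eact (D' n y) x = ext_act y n x.
Proof.
move=> HD' D'q y N n nN x yx.
apply: (ext_act_unique (H := fun j x => eact (D' j y) x)) yx => //.
move=> k _ w /dbar_pre_iter_base [m ywm].
by rewrite -(Delta_hder_eact HD') -ywm D'q Dq_qmap.
Qed.

Lemma ext_hder_unique (D' : nat -> L -> L) : is_Delta_hder iota d D' ->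
  (forall n m, D' n (q m) = q (D n m)) -> forall n y, D' n y = ext_hder n y.
Proof.
move=> HD' D'q n y.
have FK : lF (dense y n n) by apply/sym_filter_dbar_pre_iter/sym_filter_qdense.
apply: (quot_eq_dense FK) => x yx.
by rewrite (Delta_hder_ext_act HD' D'q (leqnn n) yx) (ext_hder_act (leqnn n)).
Qed.

End Extension.
End Quotient.
End SymmetricFilter.

Section Comparison.
Variables Fl1 Fr1 Fl2 Fr2 : (R -> Prop) -> Prop.
Hypotheses (HFl1 : left_Gabriel_filter Fl1) (HFr1 : right_Gabriel_filter Fr1).
Hypotheses (HFl2 : left_Gabriel_filter Fl2) (HFr2 : right_Gabriel_filter Fr2).
Hypothesis sub12 : psubset (sym_filter iota Fl1 Fr1) (sym_filter iota Fl2 Fr2).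
Variables (M L1 L2 : lmodType E^c).
Variables (phi1 : (E -> Prop) -> (E -> M) -> L1) (phi2 : (E -> Prop) -> (E -> M) -> L2).
Hypotheses (Hphi1 : is_sym_module_of_quotients iota Fl1 Fr1 phi1)
  (Hphi2 : is_sym_module_of_quotients iota Fl2 Fr2 phi2).
Variable q12 : L1 -> L2.
Hypothesis phi1K : forall K f, sym_filter iota Fl1 Fr1 K ->
  hom_lift iota Fl1 Fr1 K f -> q12 (phi1 K f) = phi2 K f.
Variable D : nat -> M -> M.
Hypothesis HD : is_Delta_hder iota d D.

Lemma hom_lift_sub K (f : E -> M) : hom_lift iota Fl1 Fr1 K f -> hom_lift iota Fl2 Fr2 K f.
Proof. by case=> fD fM; split=> *; apply: sub12; [apply: fD | apply: fM]. Qed.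

Lemma q12D : is_additive q12.
Proof.
move=> z z'; have [K [f [FK hf <-]]] := phi_surj Hphi1 z.
have [K' [f' [FK' hf' <-]]] := phi_surj Hphi1 z'.
rewrite (phiD Hphi1) // phi1K; last exact: hom_liftD.
  by rewrite !phi1K // (phiD Hphi2) //; apply/sub12 || apply/hom_lift_sub.
exact: sym_filter_cap.
Qed.

Lemma q12_eact z e : q12 (eact z e) = eact (q12 z) e.
Proof.
have [K [f [FK hf <-]]] := phi_surj Hphi1 z.
rewrite (phi_eact Hphi1) // phi1K; last exact: hom_lift_colon (sym_filter_rideal FK) hf.
  by rewrite phi1K // (phi_eact Hphi2) //; [apply: sub12 | apply: hom_lift_sub].
exact: sym_filter_colon.
Qed.

Lemma q12_qmap m : q12 (qmap phi1 m) = qmap phi2 m.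
Proof. by apply: phi1K; [apply: sym_filter_full | apply: hom_lift_full]. Qed.

Lemma q12_ext_act y N n : (n <= N)%N -> forall x, dbar_pre_iter N (qdense phi1 y) n x ->
  q12 (ext_act phi1 D y n x) = ext_act phi2 D (q12 y) n x.
Proof.
move=> nN x yx.
pose H j x := q12 (ext_act phi1 D y j x).
apply: (ext_act_unique HFl2 HFr2 Hphi2 (H := H)) yx => //.
move=> k _ w /dbar_pre_iter_base [m ywm].
rewrite -(additive_sum q12D) (ext_act_sum HFl1 HFr1 Hphi1) -q12_eact -ywm q12_qmap.
by rewrite (Dq_qmap HFl1 HFr1 Hphi1 HD) (Dq_qmap HFl2 HFr2 Hphi2 HD) q12_qmap.
Qed.

Lemma ext_hder_comparison (D1 : nat -> L1 -> L1) (D2 : nat -> L2 -> L2) :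
  is_Delta_hder iota d D1 -> (forall n m, D1 n (qmap phi1 m) = qmap phi1 (D n m)) ->
  is_Delta_hder iota d D2 -> (forall n m, D2 n (qmap phi2 m) = qmap phi2 (D n m)) ->
  forall n y, q12 (D1 n y) = D2 n (q12 y).
Proof.
move=> HD1 D1q HD2 D2q n y.
have FK : sym_filter iota Fl1 Fr1 (dbar_pre_iter n (qdense phi1 y) n).
  exact/sym_filter_dbar_pre_iter/sym_filter_qdense.
apply: (quot_eq_dense HFl2 HFr2 Hphi2 (sub12 FK)) => x yx.
rewrite -q12_eact (Delta_hder_ext_act HFl1 HFr1 Hphi1 HD HD1 D1q (leqnn n) yx).
rewrite (Delta_hder_ext_act HFl2 HFr2 Hphi2 HD HD2 D2q (leqnn n)) ?(q12_ext_act (leqnn n) yx) //.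
by apply: dbar_pre_iter_mono yx => w [m ywm]; exists m; rewrite /= -q12_eact -ywm q12_qmap.
Qed.

End Comparison.
End HigherDerivation.
End EnvelopingRing.

Theorem corollary5p1 (R E : pzRingType) (iota : R -> R -> E)
    (Hiota : is_enveloping_tensor iota)
    (d : nat -> R -> R) (Hd : is_higher_derivation d)
    (dbar : nat -> E -> E) (Hdbar : is_induced_hder iota d dbar) :
  (* (1) lFr is higher derivation invariant *)
  (forall Fl Fr, left_Gabriel_filter Fl -> right_Gabriel_filter Fr ->
     forall I, sym_filter iota Fl Fr I -> forall n : nat,
       exists J, sym_filter iota Fl Fr J /\
         (forall i : nat, (i <= n)%N -> forall x, J x -> I (dbar i x)))
  /\
  (* (2) unique extension of Delta-higher derivations to lM_r *)
  (forall Fl Fr, left_Gabriel_filter Fl -> right_Gabriel_filter Fr ->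
     forall (M : lmodType E^c) (L : lmodType E^c)
            (phi : (E -> Prop) -> (E -> M) -> L),
       is_sym_module_of_quotients iota Fl Fr phi ->
       forall D : nat -> M -> M, is_Delta_hder iota d D ->
       exists Dbar : nat -> L -> L,
         (is_Delta_hder iota d Dbar /\
          forall n m, Dbar n (qmap phi m) = qmap phi (D n m)) /\
         (forall Dbar' : nat -> L -> L,
            is_Delta_hder iota d Dbar' ->
            (forall n m, Dbar' n (qmap phi m) = qmap phi (D n m)) ->
            forall n y, Dbar' n y = Dbar n y))
  /\
  (* (3) compatibility with the canonical map q12 for lF1r <= lF2r *)
  (forall Fl1 Fr1 Fl2 Fr2,
     left_Gabriel_filter Fl1 -> right_Gabriel_filter Fr1 ->
     left_Gabriel_filter Fl2 -> right_Gabriel_filter Fr2 ->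
     psubset (sym_filter iota Fl1 Fr1) (sym_filter iota Fl2 Fr2) ->
     forall (M : lmodType E^c)
            (L1 : lmodType E^c) (phi1 : (E -> Prop) -> (E -> M) -> L1)
            (L2 : lmodType E^c) (phi2 : (E -> Prop) -> (E -> M) -> L2),
       is_sym_module_of_quotients iota Fl1 Fr1 phi1 ->
       is_sym_module_of_quotients iota Fl2 Fr2 phi2 ->
       forall q12 : L1 -> L2,
       (forall K f, sym_filter iota Fl1 Fr1 K -> hom_lift iota Fl1 Fr1 K f ->
          q12 (phi1 K f) = phi2 K f) ->
       forall D : nat -> M -> M, is_Delta_hder iota d D ->
       forall (D1 : nat -> L1 -> L1) (D2 : nat -> L2 -> L2),
         is_Delta_hder iota d D1 ->
         (forall n m, D1 n (qmap phi1 m) = qmap phi1 (D n m)) ->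
         is_Delta_hder iota d D2 ->
         (forall n m, D2 n (qmap phi2 m) = qmap phi2 (D n m)) ->
         forall n y, q12 (D1 n y) = D2 n (q12 y)).
Proof.
split; last split.
- move=> Fl Fr HFl HFr I FI n; exists (dbar_pre dbar I n).
  split=> [|i ni x]; last exact.
  exact: (sym_filter_dbar_pre Hiota Hd Hdbar HFl HFr n FI).
- move=> Fl Fr HFl HFr M L phi Hphi D HD; exists (ext_hder iota dbar Fl Fr phi D).
  split; first split.
  + exact: (ext_hder_Delta Hiota Hd Hdbar HFl HFr Hphi HD).
  + exact: (ext_hder_qmap Hiota Hd Hdbar HFl HFr Hphi HD).
  + exact: (ext_hder_unique Hiota Hd Hdbar HFl HFr Hphi HD).
- move=> Fl1 Fr1 Fl2 Fr2 HFl1 HFr1 HFl2 HFr2 sub12 M L1 phi1 L2 phi2 Hphi1 Hphi2 q12 phi1K.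
  exact: (ext_hder_comparison Hiota Hd Hdbar HFl1 HFr1 HFl2 HFr2 sub12 Hphi1 Hphi2 phi1K).
Qed.
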